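(* Consider, on a uniform one-dimensional grid $x_i=x_0+ih$, the semi-discrete scheme for $\partial_t u+\partial_x f(u)=s(x,t)$ (with $f$ a smooth nonlinear function and $s$ smooth) $$\Big(\frac{du}{dt}\Big)_i+\frac{1}{24}\Big[\Big(\frac{du}{dt}\Big)_{i+1}-2\Big(\frac{du}{dt}\Big)_i+\Big(\frac{du}{dt}\Big)_{i-1}\Big]+\frac{\phi_{i+1/2}-\phi_{i-1/2}}{h}=s(x_i)+\frac{1}{24}\big[s(x_{i+1})-2s(x_i)+s(x_{i-1})\big],$$ where $\phi_{i+1/2}=\tfrac12[f(u_L)+f(u_R)]-\tfrac12\,|f'(\bar u_{i+1/2})|\,(u_R-u_L)$ with $\bar u_{i+1/2}$ an intermediate state at the face $x_{i+1/2}$, and $u_L,u_R$ are given by the reconstruction with $\kappa=1/2$: $$u_L=u_i+\tfrac14\big[(1-\kappa)(u_i-u_{i-1})+(1+\kappa)(u_{i+1}-u_i)\big],\quad u_R=u_{i+1}-\tfrac14\big[(1-\kappa)(u_{i+1}-u_i)+(1+\kappa)(u_i-u_{i-1})\big].$$ (The source/time-derivative treatment is equivalently $s_i=s(x_i)+\tfrac{\kappa_s}{4}[s(x_{i+1})-2s(x_i)+s(x_{i-1})]$ with $\kappa_s=1/6$.) Then, for a smooth exact solution $u$ of $\partial_tu+\partial_xf(u)=s$ substituted pointwise ($u_i=u(x_i,t)$), the second-order truncation error is factored as $-\tfrac{1}{24}(u_t+f_x-s)_{xx}h^2$ and hence vanishes, so the truncation error of the scheme is $O(h^3)$, for general nonlinear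 $f$.
   Context: This is the one-dimensional U-MUSCL scheme with point-valued solutions and the special source (and time-derivative) discretization called U-MUSCL-SSQ. The truncation error is the residual (left side minus right side) evaluated with the exact solution's point values. *)

From Stdlib Require Import Reals.
From Coquelicot Require Import Coquelicot.
Open Scope R_scope.

Definition smooth (g : R -> R) : Prop := forall (n : nat) (x : R), ex_derive_n g n x.

Definition kappa : R := 1 / 2.

Definition recL (um1 u0 up1 : R) : R :=
  u0 + 1 / 4 * ((1 - kappa) * (u0 - um1) + (1 + kappa) * (up1 - u0)).

Definition recR (u0 up1 up2 : R) : R :=
  up1 - 1 / 4 * ((1 - kappa) * (up2 - up1) + (1 + kappa) * (up1 - u0)).

(* Upwind (Rusanov/Roe-type) numerical flux at face i+1/2;
   [avg uL uR] is the intermediate face state \bar u_{i+1/2}. *)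
Definition numflux (f : R -> R) (avg : R -> R -> R) (um1 u0 up1 up2 : R) : R :=
  let a := recL um1 u0 up1 in
  let b := recR u0 up1 up2 in
  1 / 2 * (f a + f b) - 1 / 2 * Rabs (Derive f (avg a b)) * (b - a).

Definition trunc_err (f : R -> R) (avg : R -> R -> R) (u s : R -> R -> R)
    (x t h : R) : R :=
  let U := fun y => u y t in
  let Ut := fun y => Derive (fun tau => u y tau) t in
  let S := fun y => s y t in
  Ut x + 1 / 24 * (Ut (x + h) - 2 * Ut x + Ut (x - h))
  + (numflux f avg (U (x - h)) (U x) (U (x + h)) (U (x + 2 * h))
     - numflux f avg (U (x - 2 * h)) (U (x - h)) (U x) (U (x + h))) / h
  - (S x + 1 / 24 * (S (x + h) - 2 * S x + S (x - h))).

(** By the PDE, [u_t = s - F'] with [F = f o u(., t)], so the source terms and their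
    SSQ corrections cancel and the truncation error is the sum of
      [((phi_(i+1/2) - phi_(i-1/2)) - (F(x+h/2) - F(x-h/2))) / h] and
      [(F(x+h/2) - F(x-h/2) - h (F'(x) + (F'(x+h) - 2 F'(x) + F'(x-h)) / 24)) / h].
    The second term is O(h^4): the 1/24 correction is exactly the [h^3 F'''(x) / 24] term
    of the half-step difference.  In the first, kappa = 1/2 makes the mean of the two
    reconstructed states the cubic midpoint interpolant
    [(- u_(i-1) + 9 u_i + 9 u_(i+1) - u_(i+2)) / 16], while each state is within O(h^2) of
    [u(x_(i+1/2))]; expanding [f] to second order gives
    [(f(u_L) + f(u_R)) / 2 = F(x_(i+1/2)) + O(h^4)].  The jump [u_R - u_L] is [-1/8] times
    a third difference, so the dissipation terms of the two faces differ by
    [|f'| * (fourth difference) + (difference of wave speeds) * (third difference)],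
    which is O(h^4) as well. *)

From Stdlib Require Import Reals Lra Lia.
From Coquelicot Require Import Coquelicot.
Open Scope R_scope.

Definition ex_derive_upto (n : nat) (g : R -> R) : Prop :=
  forall k x, (k <= n)%nat -> ex_derive_n g k x.

Lemma Derive_n_Derive (g : R -> R) n x : Derive_n (Derive g) n x = Derive_n g (S n) x.
Proof. rewrite <- Nat.add_1_r, <- (Derive_n_comp g n 1). reflexivity. Qed.

Lemma ex_derive_upto_S n g :
  ex_derive_upto (S n) g <-> (forall x, ex_derive g x) /\ ex_derive_upto n (Derive g).
Proof.
  split.
  - intros H; split.
    + intros x; exact (H 1%nat x ltac:(lia)).
    + intros [|k] x Hk; [exact I|].
      apply (ex_derive_ext (Derive_n g (S k))); [intros; symmetry; apply Derive_n_Derive|].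
      exact (H (S (S k)) x ltac:(lia)).
  - intros [H1 H2] [|[|k]] x Hk; [exact I | exact (H1 x) |].
    apply (ex_derive_ext (Derive_n (Derive g) k)); [intros; apply Derive_n_Derive|].
    exact (H2 (S k) x ltac:(lia)).
Qed.

Lemma ex_derive_upto_le m n g : (m <= n)%nat -> ex_derive_upto n g -> ex_derive_upto m g.
Proof. intros Hmn H k x Hk; apply H; lia. Qed.

Lemma ex_derive_upto_ext n f g :
  (forall x, f x = g x) -> ex_derive_upto n f -> ex_derive_upto n g.
Proof. intros Hfg H k x Hk; apply (ex_derive_n_ext f); auto. Qed.

Lemma ex_derive_upto_plus n f g :
  ex_derive_upto n f -> ex_derive_upto n g -> ex_derive_upto n (fun x => f x + g x).
Proof.
  intros Hf Hg k x Hk.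
  apply ex_derive_n_plus; apply filter_forall; intros y j Hj; [apply Hf | apply Hg]; lia.
Qed.

Lemma ex_derive_upto_mult n : forall f g,
  ex_derive_upto n f -> ex_derive_upto n g -> ex_derive_upto n (fun x => f x * g x).
Proof.
  induction n as [|n IH]; intros f g Hf Hg.
  - intros [|k] x Hk; [exact I | lia].
  - destruct (proj1 (ex_derive_upto_S n f) Hf) as [Hf1 Hf2].
    destruct (proj1 (ex_derive_upto_S n g) Hg) as [Hg1 Hg2].
    apply ex_derive_upto_S; split.
    + intros x; apply ex_derive_mult; auto.
    + apply (ex_derive_upto_ext n (fun x => Derive f x * g x + f x * Derive g x)).
      { intros x; symmetry; apply Derive_mult; auto. }
      apply ex_derive_upto_plus; apply IH; try assumption;
        (apply (ex_derive_upto_le n (S n)); [lia | assumption]).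
Qed.

Lemma ex_derive_upto_comp n : forall f g,
  ex_derive_upto n f -> ex_derive_upto n g -> ex_derive_upto n (fun x => f (g x)).
Proof.
  induction n as [|n IH]; intros f g Hf Hg.
  - intros [|k] x Hk; [exact I | lia].
  - destruct (proj1 (ex_derive_upto_S n f) Hf) as [Hf1 Hf2].
    destruct (proj1 (ex_derive_upto_S n g) Hg) as [Hg1 Hg2].
    apply ex_derive_upto_S; split.
    + intros x; apply ex_derive_comp; auto.
    + apply (ex_derive_upto_ext n (fun x => Derive g x * Derive f (g x))).
      { intros x; symmetry; apply Derive_comp; auto. }
      apply ex_derive_upto_mult; auto.
      apply IH; [assumption | apply (ex_derive_upto_le n (S n)); [lia | assumption]].
Qed.

Lemma smooth_upto g : smooth g <-> forall n, ex_derive_upto n g.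
Proof.
  split; intros H.
  - intros n k x _; apply H.
  - intros n x; exact (H n n x (Nat.le_refl n)).
Qed.

Lemma smooth_comp f g : smooth f -> smooth g -> smooth (fun x => f (g x)).
Proof. rewrite !smooth_upto; intros Hf Hg n; apply ex_derive_upto_comp; auto. Qed.

Lemma smooth_Derive g : smooth g -> smooth (Derive g).
Proof. rewrite !smooth_upto; intros H n; apply (ex_derive_upto_S n g); auto. Qed.

Lemma smooth_comp_opp g : smooth g -> smooth (fun y => g (- y)).
Proof. intros H n x; apply ex_derive_n_comp_opp, filter_forall; intros; apply H. Qed.

Definition taylor_poly (g : R -> R) (n : nat) (a d : R) : R :=
  sum_f_R0 (fun m => d ^ m / INR (Factorial.fact m) * Derive_n g m a) n.

Lemma taylor_poly_O g a d : taylor_poly g 0 a d = g a.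
Proof. unfold taylor_poly; simpl; field. Qed.

Lemma taylor_poly_S g n a d :
  taylor_poly g (S n) a d
  = taylor_poly g n a d + d ^ S n / INR (Factorial.fact (S n)) * Derive_n g (S n) a.
Proof. reflexivity. Qed.

Lemma taylor_poly_at_0 g n a : taylor_poly g n a 0 = g a.
Proof.
  induction n as [|n IH]; [apply taylor_poly_O|].
  rewrite taylor_poly_S, IH; replace (0 ^ S n) with 0 by (simpl; ring).
  unfold Rdiv; ring.
Qed.

Lemma taylor_poly_comp_opp g n a d : smooth g ->
  taylor_poly (fun y => g (- y)) n (- a) (- d) = taylor_poly g n a d.
Proof.
  intros Hg; apply sum_eq; intros m _.
  rewrite Derive_n_comp_opp, Ropp_involutive by (apply filter_forall; intros; apply Hg).
  replace (- d) with (-1 * d) by ring.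
  rewrite Rpow_mult_distr.
  replace ((-1) ^ m * d ^ m / INR (Factorial.fact m) * ((-1) ^ m * Derive_n g m a))
    with ((-1 * -1) ^ m * (d ^ m / INR (Factorial.fact m) * Derive_n g m a))
    by (rewrite Rpow_mult_distr; unfold Rdiv; ring).
  replace (-1 * -1) with 1 by ring.
  rewrite pow1; ring.
Qed.

Lemma ex_derive_bounded_on g lo hi : (forall y, ex_derive g y) ->
  exists K, 0 <= K /\ forall y, lo <= y <= hi -> Rabs (g y) <= K.
Proof.
  intros Hg; destruct (Rle_dec lo hi) as [Hlo | Hlo].
  - destruct (continuity_ab_maj (fun y => Rabs (g y)) lo hi Hlo) as [M [HM _]].
    + intros c _; apply (continuity_pt_comp g Rabs); [|apply Rcontinuity_abs].
      apply continuity_pt_filterlim; exact (ex_derive_continuous g c (Hg c)).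
    + exists (Rabs (g M)); split; [apply Rabs_pos | exact HM].
  - exists 0; split; [lra|]; intros y Hy; lra.
Qed.

Lemma taylor_remainder_bound_pos g n lo hi : smooth g ->
  exists M, 0 <= M /\ forall a d, lo <= a -> 0 < d -> a + d <= hi ->
    Rabs (g (a + d) - taylor_poly g n a d) <= M * d ^ S n.
Proof.
  intros Hg.
  destruct (ex_derive_bounded_on (Derive_n g (S n)) lo hi) as [K [HK0 HK]];
    [intros; apply (Hg (S (S n)))|].
  pose proof (INR_fact_lt_0 (S n)) as Hfact.
  exists (K / INR (Factorial.fact (S n))); split; [apply Rdiv_le_0_compat; lra|].
  intros a d Ha Hd Had.
  destruct (Taylor_Lagrange g n a (a + d)) as [z [Hz ->]]; [lra | intros; apply Hg |].
  replace (a + d - a) with d by ring; unfold taylor_poly; rewrite Rplus_minus_l.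
  rewrite Rabs_mult, (Rabs_pos_eq (d ^ S n / _))
    by (apply Rdiv_le_0_compat; [apply pow_le|]; lra).
  replace (K / INR (Factorial.fact (S n)) * d ^ S n)
    with (d ^ S n / INR (Factorial.fact (S n)) * K) by (unfold Rdiv; ring).
  apply Rmult_le_compat_l; [apply Rdiv_le_0_compat; [apply pow_le|]; lra | apply HK; lra].
Qed.

Lemma taylor_remainder_bound g n lo hi : smooth g ->
  exists M, 0 <= M /\ forall a d, lo <= a <= hi -> lo <= a + d <= hi ->
    Rabs (g (a + d) - taylor_poly g n a d) <= M * Rabs d ^ S n.
Proof.
  intros Hg.
  destruct (taylor_remainder_bound_pos g n lo hi Hg) as [M1 [HM1 T1]].
  destruct (taylor_remainder_bound_pos _ n (- hi) (- lo) (smooth_comp_opp g Hg))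
    as [M2 [HM2 T2]].
  exists (M1 + M2); split; [lra|].
  intros a d Ha Had.
  destruct (Rtotal_order d 0) as [Hd | [-> | Hd]].
  - specialize (T2 (- a) (- d) ltac:(lra) ltac:(lra) ltac:(lra)).
    rewrite taylor_poly_comp_opp, Ropp_plus_distr, !Ropp_involutive in T2 by exact Hg.
    rewrite (Rabs_left d) by exact Hd.
    eapply Rle_trans; [exact T2|].
    apply Rmult_le_compat_r; [apply pow_le|]; lra.
  - rewrite taylor_poly_at_0, Rplus_0_r, Rminus_diag, Rabs_R0.
    apply Rmult_le_pos; [|apply pow_le]; lra.
  - specialize (T1 a d ltac:(lra) Hd ltac:(lra)).
    rewrite (Rabs_pos_eq d) by lra.
    eapply Rle_trans; [exact T1|].
    apply Rmult_le_compat_r; [apply pow_le|]; lra.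
Qed.

Definition bigO (n : nat) (g : R -> R) : Prop :=
  exists C, at_right 0 (fun h => Rabs (g h) <= C * h ^ n).

Lemma at_right_0_lt e : 0 < e -> at_right 0 (fun h => 0 < h < e).
Proof.
  intros He; exists (mkposreal e He); intros h Hh Hpos; split; [exact Hpos|].
  change (Rabs (h - 0) < e) in Hh; rewrite Rminus_0_r in Hh.
  apply Rabs_lt_between in Hh; lra.
Qed.

Lemma bigO_spec n g : bigO n g ->
  exists C delta, 0 < delta /\ forall h, 0 < h < delta -> Rabs (g h) <= C * h ^ n.
Proof.
  intros [C [eps H]]; exists C, eps; split; [apply cond_pos|].
  intros h Hh; apply H; [|lra].
  change (Rabs (h - 0) < eps); rewrite Rminus_0_r, Rabs_pos_eq; lra.
Qed.

Lemma bigO_ext n g1 g2 : (forall h, 0 < h -> g1 h = g2 h) -> bigO n g1 -> bigO n g2.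
Proof.
  intros Hg [C HC]; exists C.
  generalize (filter_and _ _ HC (at_right_0_lt 1 Rlt_0_1)); apply filter_imp.
  intros h [Hh Hpos]; rewrite <- Hg; lra.
Qed.

Lemma bigO_le n g1 g2 :
  (forall h, 0 < h -> Rabs (g2 h) <= Rabs (g1 h)) -> bigO n g1 -> bigO n g2.
Proof.
  intros Hg [C HC]; exists C.
  generalize (filter_and _ _ HC (at_right_0_lt 1 Rlt_0_1)); apply filter_imp.
  intros h [Hh Hpos]; specialize (Hg h ltac:(lra)); lra.
Qed.

Lemma bigO_abs n g : bigO n g -> bigO n (fun h => Rabs (g h)).
Proof. apply bigO_le; intros h _; rewrite Rabs_Rabsolu; lra. Qed.

Lemma bigO_const c : bigO 0 (fun _ => c).
Proof. exists (Rabs c); apply filter_forall; intros h; simpl; lra. Qed.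

Lemma bigO_id : bigO 1 (fun h => h).
Proof.
  exists 1; generalize (at_right_0_lt 1 Rlt_0_1); apply filter_imp.
  intros h Hh; rewrite Rabs_pos_eq; simpl; lra.
Qed.

Lemma bigO_plus n g1 g2 : bigO n g1 -> bigO n g2 -> bigO n (fun h => g1 h + g2 h).
Proof.
  intros [C1 H1] [C2 H2]; exists (C1 + C2).
  generalize (filter_and _ _ H1 H2); apply filter_imp; intros h [Hh1 Hh2].
  eapply Rle_trans; [apply Rabs_triang | lra].
Qed.

Lemma bigO_scal n c g : bigO n g -> bigO n (fun h => c * g h).
Proof.
  intros [C H]; exists (Rabs c * C).
  generalize H; apply filter_imp; intros h Hh.
  rewrite Rabs_mult, Rmult_assoc; apply Rmult_le_compat_l; [apply Rabs_pos | exact Hh].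
Qed.

Lemma bigO_minus n g1 g2 : bigO n g1 -> bigO n g2 -> bigO n (fun h => g1 h - g2 h).
Proof.
  intros H1 H2.
  apply (bigO_ext n (fun h => g1 h + -1 * g2 h)); [intros; ring|].
  apply bigO_plus; [exact H1 | apply bigO_scal, H2].
Qed.

Lemma bigO_mult m n g1 g2 :
  bigO m g1 -> bigO n g2 -> bigO (m + n) (fun h => g1 h * g2 h).
Proof.
  intros [C1 H1] [C2 H2]; exists (C1 * C2).
  generalize (filter_and _ _ H1 H2); apply filter_imp; intros h [Hh1 Hh2].
  rewrite Rabs_mult, pow_add.
  replace (C1 * C2 * (h ^ m * h ^ n)) with ((C1 * h ^ m) * (C2 * h ^ n)) by ring.
  apply Rmult_le_compat; auto using Rabs_pos.
Qed.

Lemma bigO_S n g : bigO (S n) g -> bigO n g.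
Proof.
  intros [C H]; exists (Rabs C).
  generalize (filter_and _ _ H (at_right_0_lt 1 Rlt_0_1)); apply filter_imp.
  intros h [Hh Hpos]; simpl in Hh.
  assert (0 <= h ^ n) by (apply pow_le; lra).
  assert (C * (h * h ^ n) <= Rabs C * (h * h ^ n))
    by (apply Rmult_le_compat_r; [apply Rmult_le_pos; lra | apply Rle_abs]).
  assert (Rabs C * (h * h ^ n) <= Rabs C * h ^ n)
    by (apply Rmult_le_compat_l; [apply Rabs_pos | nra]).
  lra.
Qed.

Lemma bigO_weaken m n g : (m <= n)%nat -> bigO n g -> bigO m g.
Proof. induction 1; auto using bigO_S. Qed.

Lemma bigO_div_h n g : bigO (S n) g -> bigO n (fun h => g h / h).
Proof.
  intros [C H]; exists C.
  generalize (filter_and _ _ H (at_right_0_lt 1 Rlt_0_1)); apply filter_imp.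
  intros h [Hh Hpos].
  unfold Rdiv; rewrite Rabs_mult, Rabs_inv, (Rabs_pos_eq h) by lra.
  apply (Rmult_le_reg_r h); [lra|].
  rewrite Rmult_assoc, Rinv_l by lra; simpl in Hh; lra.
Qed.

Lemma bigO_0_common_bound a b : bigO 0 a -> bigO 0 b ->
  exists V, at_right 0 (fun h => -V <= a h <= V /\ -V <= b h <= V).
Proof.
  intros [Ca Ha] [Cb Hb]; exists (Rabs Ca + Rabs Cb).
  generalize (filter_and _ _ Ha Hb); apply filter_imp; intros h [Hah Hbh].
  simpl in Hah, Hbh; rewrite Rmult_1_r in Hah, Hbh.
  apply Rabs_le_between in Hah, Hbh.
  pose proof (Rle_abs Ca); pose proof (Rle_abs Cb);
  pose proof (Rabs_pos Ca); pose proof (Rabs_pos Cb); lra.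
Qed.

Lemma bigO_0_of_sub n a m :
  bigO 0 m -> bigO n (fun h => a h - m h) -> bigO 0 a.
Proof.
  intros Hm Ham.
  apply (bigO_ext 0 (fun h => (a h - m h) + m h)); [intros; ring|].
  apply bigO_plus; [apply (bigO_weaken 0 n); [lia | exact Ham] | exact Hm].
Qed.

Lemma bigO_comp_sub g a b n : smooth g -> bigO 0 b -> bigO n (fun h => a h - b h) ->
  bigO n (fun h => g (a h) - g (b h)).
Proof.
  intros Hg Hb Hab.
  destruct (bigO_0_common_bound a b (bigO_0_of_sub n a b Hb Hab) Hb) as [V HV].
  destruct (taylor_remainder_bound g 0 (- V) V Hg) as [M [HM T]].
  destruct Hab as [C HC]; exists (M * C).
  generalize (filter_and _ _ HV HC); apply filter_imp; intros h [[Ha Hb'] Hh].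
  specialize (T (b h) (a h - b h) Hb' ltac:(lra)).
  rewrite taylor_poly_O, Rplus_minus, pow_1 in T.
  eapply Rle_trans; [exact T|].
  rewrite Rmult_assoc; apply Rmult_le_compat_l; [exact HM | exact Hh].
Qed.

Lemma bigO_comp_taylor1 g a b n : smooth g -> bigO 0 b -> bigO n (fun h => a h - b h) ->
  bigO (n + n) (fun h => g (a h) - g (b h) - Derive g (b h) * (a h - b h)).
Proof.
  intros Hg Hb Hab.
  destruct (bigO_0_common_bound a b (bigO_0_of_sub n a b Hb Hab) Hb) as [V HV].
  destruct (taylor_remainder_bound g 1 (- V) V Hg) as [M [HM T]].
  destruct Hab as [C HC]; exists (M * C ^ 2).
  generalize (filter_and _ _ HV HC); apply filter_imp; intros h [[Ha Hb'] Hh].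
  specialize (T (b h) (a h - b h) Hb' ltac:(lra)).
  rewrite taylor_poly_S, taylor_poly_O, Rplus_minus in T.
  change (Derive_n g 1 (b h)) with (Derive g (b h)) in T.
  replace (g (b h) + (a h - b h) ^ 1 / INR (Factorial.fact 1) * Derive g (b h))
    with (g (b h) + Derive g (b h) * (a h - b h)) in T by (simpl; field).
  replace (g (a h) - g (b h) - Derive g (b h) * (a h - b h))
    with (g (a h) - (g (b h) + Derive g (b h) * (a h - b h))) by ring.
  eapply Rle_trans; [exact T|].
  replace (M * C ^ 2 * h ^ (n + n)) with (M * (C * h ^ n) ^ 2) by (rewrite pow_add; ring).
  apply Rmult_le_compat_l; [exact HM|].
  apply pow_incr; split; [apply Rabs_pos | exact Hh].
Qed.

Lemma bigO_comp_bounded g a : smooth g -> bigO 0 a -> bigO 0 (fun h => g (a h)).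
Proof.
  intros Hg Ha.
  apply (bigO_0_of_sub 0 _ (fun _ => g 0)); [apply bigO_const|].
  apply bigO_comp_sub; [exact Hg | apply bigO_const |].
  apply (bigO_ext 0 a); [intros; ring | exact Ha].
Qed.

Lemma bigO_midpoint_comp g a b m n : smooth g -> bigO 0 m ->
  bigO n (fun h => a h - m h) -> bigO n (fun h => b h - m h) ->
  bigO (n + n) (fun h => 1 / 2 * (a h + b h) - m h) ->
  bigO (n + n) (fun h => 1 / 2 * (g (a h) + g (b h)) - g (m h)).
Proof.
  intros Hg Hm Ha Hb Hab.
  apply (bigO_ext _ (fun h =>
      1 / 2 * (g (a h) - g (m h) - Derive g (m h) * (a h - m h))
    + 1 / 2 * (g (b h) - g (m h) - Derive g (m h) * (b h - m h))
    + Derive g (m h) * (1 / 2 * (a h + b h) - m h))); [intros; field|].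
  apply bigO_plus; [apply bigO_plus; apply bigO_scal; apply bigO_comp_taylor1; auto|].
  apply (bigO_mult 0 (n + n)); [|exact Hab].
  apply bigO_comp_bounded; [apply smooth_Derive, Hg | exact Hm].
Qed.

Lemma bigO_between avg a b c n : (forall a b, Rmin a b <= avg a b <= Rmax a b) ->
  bigO n (fun h => a h - c h) -> bigO n (fun h => b h - c h) ->
  bigO n (fun h => avg (a h) (b h) - c h).
Proof.
  intros Havg Ha Hb.
  apply (bigO_le _ (fun h => Rabs (a h - c h) + 2 * Rabs (b h - c h))).
  - intros h _.
    set (A := avg (a h) (b h)).
    assert (HA : Rabs (A - b h) <= Rabs (a h - b h))
      by exact (Rabs_le_between_min_max _ _ _ (Havg (a h) (b h))).
    assert (Hac : Rabs (a h - b h) <= Rabs (a h - c h) + Rabs (b h - c h)).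
    { rewrite (Rabs_minus_sym (b h)).
      replace (a h - b h) with ((a h - c h) + (c h - b h)) by ring; apply Rabs_triang. }
    assert (HAc : Rabs (A - c h) <= Rabs (A - b h) + Rabs (b h - c h)).
    { replace (A - c h) with ((A - b h) + (b h - c h)) by ring; apply Rabs_triang. }
    pose proof (Rabs_pos (a h - c h)); pose proof (Rabs_pos (b h - c h)).
    rewrite (Rabs_pos_eq (_ + _)); lra.
  - apply bigO_plus; [|apply bigO_scal]; apply bigO_abs; assumption.
Qed.

Definition eqO (n : nat) (g P : R -> R) : Prop := bigO n (fun h => g h - P h).

Lemma eqO_refl n g : eqO n g g.
Proof. exists 0; apply filter_forall; intros h; rewrite Rminus_diag, Rabs_R0; lra. Qed.

Lemma eqO_plus n g1 g2 P1 P2 : eqO n g1 P1 -> eqO n g2 P2 ->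
  eqO n (fun h => g1 h + g2 h) (fun h => P1 h + P2 h).
Proof.
  intros H1 H2; apply (bigO_ext n (fun h => (g1 h - P1 h) + (g2 h - P2 h))); [intros; ring|].
  apply bigO_plus; assumption.
Qed.

Lemma eqO_minus n g1 g2 P1 P2 : eqO n g1 P1 -> eqO n g2 P2 ->
  eqO n (fun h => g1 h - g2 h) (fun h => P1 h - P2 h).
Proof.
  intros H1 H2; apply (bigO_ext n (fun h => (g1 h - P1 h) - (g2 h - P2 h))); [intros; ring|].
  apply bigO_minus; assumption.
Qed.

Lemma eqO_scal n c g P : eqO n g P -> eqO n (fun h => c * g h) (fun h => c * P h).
Proof.
  intros H; apply (bigO_ext n (fun h => c * (g h - P h))); [intros; ring|].
  apply bigO_scal; assumption.
Qed.

Lemma eqO_mul_h n g P : eqO n g P -> eqO (S n) (fun h => h * g h) (fun h => h * P h).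
Proof.
  intros H; apply (bigO_ext (1 + n) (fun h => h * (g h - P h))); [intros; ring|].
  apply bigO_mult; [apply bigO_id | exact H].
Qed.

Lemma eqO_bigO n g P : eqO n g P -> (forall h, 0 < h -> P h = 0) -> bigO n g.
Proof.
  intros H HP; apply (bigO_ext n (fun h => g h - P h)); [|exact H].
  intros h Hh; rewrite HP by exact Hh; ring.
Qed.

Lemma eqO_taylor g n a c p : smooth g -> (forall h, p h = a + c * h) ->
  eqO (S n) (fun h => g (p h)) (fun h => taylor_poly g n a (c * h)).
Proof.
  intros Hg Hp.
  destruct (taylor_remainder_bound g n (a - Rabs c) (a + Rabs c) Hg) as [M [HM T]].
  exists (M * Rabs c ^ S n).
  generalize (at_right_0_lt 1 Rlt_0_1); apply filter_imp; intros h Hh.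
  pose proof (Rabs_pos c).
  assert (Hch : Rabs (c * h) <= Rabs c)
    by (rewrite Rabs_mult, (Rabs_pos_eq h) by lra; nra).
  apply Rabs_le_between in Hch.
  rewrite Hp; specialize (T a (c * h) ltac:(lra) ltac:(lra)).
  rewrite Rabs_mult, (Rabs_pos_eq h), Rpow_mult_distr, <- Rmult_assoc in T by lra.
  exact T.
Qed.

Lemma Derive_n_1 g x : Derive_n g 1 x = Derive g x.
Proof. reflexivity. Qed.

(* Used as [eapply eqO_bigO; [expand_eqO | taylor_cancel]]: the expansion of a linear
   combination is assembled from the expansions in the context, and the second goal is
   that the resulting combination of Taylor polynomials vanishes identically.
   [eqO_minus] must come before [eqO_plus], which would also match [a - b] through
   [Rminus]; terms with no expansion in the context are taken as exact by [eqO_refl]. *)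
Ltac expand_eqO :=
  repeat first
    [ eassumption | apply eqO_minus | apply eqO_plus | apply eqO_scal | apply eqO_mul_h
    | apply eqO_refl ].

Ltac taylor_cancel :=
  intros; cbv beta; rewrite ?taylor_poly_S, ?taylor_poly_O, ?Derive_n_Derive, ?Derive_n_1;
  cbn [Factorial.fact INR Nat.mul Nat.add]; field.

Lemma half_step_difference F x : smooth F ->
  bigO 5 (fun h => F (x + h / 2) - F (x - h / 2)
    - h * (Derive F x + 1 / 24 * (Derive F (x + h) - 2 * Derive F x + Derive F (x - h)))).
Proof.
  intros HF; pose proof (smooth_Derive F HF) as HDF.
  pose proof (eqO_taylor F 4 x (1 / 2) (fun h => x + h / 2) HF ltac:(intros; cbv beta; field)).
  pose proof (eqO_taylor F 4 x (-1 / 2) (fun h => x - h / 2) HF ltac:(intros; cbv beta; field)).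
  pose proof (eqO_taylor (Derive F) 3 x 1 (fun h => x + h) HDF ltac:(intros; cbv beta; ring)).
  pose proof (eqO_taylor (Derive F) 3 x (-1) (fun h => x - h) HDF ltac:(intros; cbv beta; ring)).
  eapply eqO_bigO; [expand_eqO | taylor_cancel].
Qed.

Definition central_flux (f : R -> R) (um1 u0 up1 up2 : R) : R :=
  1 / 2 * (f (recL um1 u0 up1) + f (recR u0 up1 up2)).

Definition dissipation (f : R -> R) (avg : R -> R -> R) (um1 u0 up1 up2 : R) : R :=
  1 / 2 * Rabs (Derive f (avg (recL um1 u0 up1) (recR u0 up1 up2)))
    * (recR u0 up1 up2 - recL um1 u0 up1).

Lemma numflux_split f avg um1 u0 up1 up2 :
  numflux f avg um1 u0 up1 up2
  = central_flux f um1 u0 up1 up2 - dissipation f avg um1 u0 up1 up2.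
Proof. reflexivity. Qed.

(* The face between the nodes [x + k h] and [x + (k + 1) h]; [k = 0] and [k = -1] give
   the faces [x_(i+1/2)] and [x_(i-1/2)]. *)
Section Face.

Variables (U : R -> R) (x k : R) (pm1 p0 p1 p2 pf : R -> R).
Hypothesis HU : smooth U.
Hypotheses (Hpm1 : forall h, pm1 h = x + (k - 1) * h) (Hp0 : forall h, p0 h = x + k * h)
  (Hp1 : forall h, p1 h = x + (k + 1) * h) (Hp2 : forall h, p2 h = x + (k + 2) * h).
Hypothesis Hpf : forall h, pf h = x + (k + 1 / 2) * h.

Lemma stencil_taylor n :
  eqO (S n) (fun h => U (pm1 h)) (fun h => taylor_poly U n x ((k - 1) * h)) /\
  eqO (S n) (fun h => U (p0 h)) (fun h => taylor_poly U n x (k * h)) /\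
  eqO (S n) (fun h => U (p1 h)) (fun h => taylor_poly U n x ((k + 1) * h)) /\
  eqO (S n) (fun h => U (p2 h)) (fun h => taylor_poly U n x ((k + 2) * h)).
Proof. repeat split; apply eqO_taylor; assumption. Qed.

Lemma recL_face : bigO 2 (fun h => recL (U (pm1 h)) (U (p0 h)) (U (p1 h)) - U (pf h)).
Proof.
  destruct (stencil_taylor 1) as (?&?&?&?); pose proof (eqO_taylor U 1 x _ pf HU Hpf).
  eapply eqO_bigO; [unfold recL, kappa; expand_eqO | taylor_cancel].
Qed.

Lemma recR_face : bigO 2 (fun h => recR (U (p0 h)) (U (p1 h)) (U (p2 h)) - U (pf h)).
Proof.
  destruct (stencil_taylor 1) as (?&?&?&?); pose proof (eqO_taylor U 1 x _ pf HU Hpf).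
  eapply eqO_bigO; [unfold recR, kappa; expand_eqO | taylor_cancel].
Qed.

Lemma recLR_mean_face : bigO 4 (fun h =>
  1 / 2 * (recL (U (pm1 h)) (U (p0 h)) (U (p1 h)) + recR (U (p0 h)) (U (p1 h)) (U (p2 h)))
  - U (pf h)).
Proof.
  destruct (stencil_taylor 3) as (?&?&?&?); pose proof (eqO_taylor U 3 x _ pf HU Hpf).
  eapply eqO_bigO; [unfold recL, recR, kappa; expand_eqO | taylor_cancel].
Qed.

Lemma U_face_bounded : bigO 0 (fun h => U (pf h)).
Proof.
  apply (bigO_0_of_sub 1 _ (fun _ => U x)); [apply bigO_const|].
  pose proof (eqO_taylor U 0 x _ pf HU Hpf).
  eapply eqO_bigO; [expand_eqO | taylor_cancel].
Qed.

Lemma central_flux_face f : smooth f ->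
  bigO 4 (fun h => central_flux f (U (pm1 h)) (U (p0 h)) (U (p1 h)) (U (p2 h)) - f (U (pf h))).
Proof.
  intros Hf; apply (bigO_midpoint_comp f _ _ _ 2 Hf);
    [exact U_face_bounded | exact recL_face | exact recR_face | exact recLR_mean_face].
Qed.

Lemma avg_face_center avg : (forall a b, Rmin a b <= avg a b <= Rmax a b) ->
  bigO 1 (fun h => avg (recL (U (pm1 h)) (U (p0 h)) (U (p1 h)))
                       (recR (U (p0 h)) (U (p1 h)) (U (p2 h))) - U x).
Proof.
  intros Havg; destruct (stencil_taylor 0) as (?&?&?&?).
  apply bigO_between; [exact Havg | |];
    (eapply eqO_bigO; [unfold recL, recR, kappa; expand_eqO | taylor_cancel]).
Qed.

End Face.

Lemma centered_taylor U x n : smooth U ->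
  eqO (S n) (fun h => U (x - 2 * h)) (fun h => taylor_poly U n x (-2 * h)) /\
  eqO (S n) (fun h => U (x - h)) (fun h => taylor_poly U n x (-1 * h)) /\
  eqO (S n) (fun h => U (x + h)) (fun h => taylor_poly U n x (1 * h)) /\
  eqO (S n) (fun h => U (x + 2 * h)) (fun h => taylor_poly U n x (2 * h)).
Proof. intros HU; repeat split; apply eqO_taylor; auto; intros; ring. Qed.

Lemma dissipation_difference f avg U x : smooth f ->
  (forall a b, Rmin a b <= avg a b <= Rmax a b) -> smooth U ->
  bigO 4 (fun h => dissipation f avg (U (x - h)) (U x) (U (x + h)) (U (x + 2 * h))
                 - dissipation f avg (U (x - 2 * h)) (U (x - h)) (U x) (U (x + h))).
Proof.
  intros Hf Havg HU.
  pose (Ap h := avg (recL (U (x - h)) (U x) (U (x + h)))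
                    (recR (U x) (U (x + h)) (U (x + 2 * h)))).
  pose (Am h := avg (recL (U (x - 2 * h)) (U (x - h)) (U x))
                    (recR (U (x - h)) (U x) (U (x + h)))).
  pose (Jp h := recR (U x) (U (x + h)) (U (x + 2 * h)) - recL (U (x - h)) (U x) (U (x + h))).
  pose (Jm h := recR (U (x - h)) (U x) (U (x + h)) - recL (U (x - 2 * h)) (U (x - h)) (U x)).
  assert (HAp : bigO 1 (fun h => Ap h - U x))
    by (apply (avg_face_center U x 0); auto; intros; ring).
  assert (HAm : bigO 1 (fun h => Am h - U x))
    by (apply (avg_face_center U x (-1)); auto; intros; ring).
  apply (bigO_ext 4 (fun h => 1 / 2 * Rabs (Derive f (Ap h)) * (Jp h - Jm h)
    + 1 / 2 * (Rabs (Derive f (Ap h)) - Rabs (Derive f (Am h))) * Jm h));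
    [intros; unfold dissipation, Ap, Am, Jp, Jm; ring|].
  apply bigO_plus.
  - apply (bigO_mult 0 4).
    + apply bigO_scal, bigO_abs, bigO_comp_bounded; [apply smooth_Derive, Hf|].
      apply (bigO_0_of_sub 1 _ (fun _ => U x)); [apply bigO_const | exact HAp].
    + destruct (centered_taylor U x 3 HU) as (?&?&?&?).
      eapply eqO_bigO; [unfold Jp, Jm, recL, recR, kappa; expand_eqO | taylor_cancel].
  - apply (bigO_mult 1 3).
    + apply bigO_scal.
      apply (bigO_le _ (fun h => Derive f (Ap h) - Derive f (Am h)));
        [intros; apply Rabs_triang_inv2|].
      apply bigO_comp_sub; [apply smooth_Derive, Hf | |].
      * apply (bigO_0_of_sub 1 _ (fun _ => U x)); [apply bigO_const | exact HAm].
      * apply (bigO_ext 1 (fun h => (Ap h - U x) - (Am h - U x))); [intros; ring|].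
        apply bigO_minus; assumption.
    + destruct (centered_taylor U x 2 HU) as (?&?&?&?).
      eapply eqO_bigO; [unfold Jm, recL, recR, kappa; expand_eqO | taylor_cancel].
Qed.

Theorem mainTheorem2 :
  forall (f : R -> R) (avg : R -> R -> R) (u s : R -> R -> R),
    smooth f ->
    (forall a b, Rmin a b <= avg a b <= Rmax a b) ->
    (forall t, smooth (fun y => u y t)) ->
    (forall y, smooth (fun tau => u y tau)) ->
    (forall t, smooth (fun y => s y t)) ->
    (forall y t, Derive (fun tau => u y tau) t + Derive (fun z => f (u z t)) y = s y t) ->
    forall x t : R,
      exists C delta : R, 0 < delta /\
        forall h : R, 0 < h < delta ->
          Rabs (trunc_err f avg u s x t h) <= C * h ^ 3.
Proof.
  intros f avg u s Hf Havg Hu _ _ Hpde x t.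
  pose proof (Hu t) as HU.
  assert (Hut : forall y, Derive (fun tau => u y tau) t = s y t - Derive (fun z => f (u z t)) y)
    by (intros y; specialize (Hpde y t); lra).
  apply bigO_spec, (bigO_ext 3 (fun h => (
      (central_flux f (u (x - h) t) (u x t) (u (x + h) t) (u (x + 2 * h) t)
       - f (u (x + h / 2) t))
    - (central_flux f (u (x - 2 * h) t) (u (x - h) t) (u x t) (u (x + h) t)
       - f (u (x - h / 2) t))
    - (dissipation f avg (u (x - h) t) (u x t) (u (x + h) t) (u (x + 2 * h) t)
       - dissipation f avg (u (x - 2 * h) t) (u (x - h) t) (u x t) (u (x + h) t))
    + (f (u (x + h / 2) t) - f (u (x - h / 2) t)
       - h * (Derive (fun z => f (u z t)) x + 1 / 24 * (Derive (fun z => f (u z t)) (x + h)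
          - 2 * Derive (fun z => f (u z t)) x + Derive (fun z => f (u z t)) (x - h))))) / h)).
  { intros h Hh; unfold trunc_err; cbv zeta beta.
    rewrite !numflux_split, !Hut; field; lra. }
  apply bigO_div_h.
  apply bigO_plus; [apply bigO_minus; [apply bigO_minus|] |].
  - apply (central_flux_face (fun y => u y t) x 0); auto; intros; field.
  - apply (central_flux_face (fun y => u y t) x (-1)); auto; intros; field.
  - apply (dissipation_difference f avg (fun y => u y t)); auto.
  - apply (bigO_weaken 4 5); [lia|].
    apply (half_step_difference (fun z => f (u z t))), smooth_comp; auto.
Qed.
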